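(* Let $U,V\subseteq M$ be open and let $\Psi:U\to V$ be a diffeomorphism with $\Psi^*t=t$. Then: (1) for every covariant tensor $\omega$ on $V$, $j_*\Psi^*\omega=j_*\Psi^*j_*\omega$; (2) for every $(n+1)$-form $\omega$ and spatial vector field $S$ on $V$, $j_*\Psi^*(S\lrcorner\omega)=0$; (3) if additionally $\Psi$ is the identity on $\Sigma_{t_0}\cap U$ for some $t_0$, and $B$ is a spatial tensor field on $V$, then $j_*\Psi^*B=B$ on $\Sigma_{t_0}\cap U$.
   Context: $M=\Sigma\times I$, where $\Sigma\subseteq\mathbb R^n$ is open with coordinates $x^1,\dots,x^n$ and $I\subseteq\mathbb R$ is an open interval with coordinate $t$; $\Sigma_t=\Sigma\times\{t\}$. A tensor is spatial if it vanishes whenever one of its arguments is $dt$ or $\partial_t$. The projection $j_*$ onto spatial tensors is defined by $j_*dt=0$, $j_*dx^i=dx^i$, $j_*\partial_t=0$, $j_*\partial_{x^i}=\partial_{x^i}$, extended by $j_*T(\cdot,\dots,\cdot)=T(j_*\cdot,\dots,j_*\cdot)$. The pullback $\Psi^*$ acts on vectors by $\Psi^*Y=(\Psi^{-1})_*Y$ and hence on arbitrary tensors. *)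

From HB Require Import structures.
From mathcomp Require Import all_boot all_order all_algebra.
From mathcomp Require Import all_classical all_reals all_analysis.
Set Implicit Arguments. Unset Strict Implicit. Unset Printing Implicit Defensive.
Import Order.TTheory GRing.Theory Num.Theory.
Import numFieldNormedType.Exports.
Local Open Scope classical_set_scope.
Local Open Scope ring_scope.

(* M = Sigma x I is an open subset of R^(n+1).  Points, tangent vectors and
   cotangent vectors are all represented by row vectors 'rV[R]_(n.+1) of
   components: indices 0..n-1 are the spatial coordinates x^1..x^n, and the
   last index (ord_max) is the time coordinate t.  A tangent vector v stands
   for sum_i v_i d/dx^i ; a covector a stands for sum_i a_i dx^i. *)

Definition pt (R : realType) n := 'rV[R]_(n.+1).

Definition tix n : 'I_(n.+1) := ord_max.
Definition tcoord (R : realType) n (p : pt R n) : R := p 0 (tix n).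
Definition xpart (R : realType) n (p : pt R n) : 'rV[R]_n :=
  \row_(i < n) p 0 (widen_ord (leqnSn n) i).

Definition Mset (R : realType) n (Sig : set 'rV[R]_n) (I : set R) : set (pt R n) :=
  [set p | Sig (xpart p) /\ I (tcoord p)].
Definition slice (R : realType) n (Sig : set 'rV[R]_n) (I : set R) (t0 : R)
  : set (pt R n) := [set p | Mset Sig I p /\ tcoord p = t0].

(* basis vectors e_i (= d/dx^i as vectors, dx^i as covectors) *)
Definition ebasis (R : realType) n (i : 'I_(n.+1)) : pt R n := delta_mx 0 i.
Definition dtc (R : realType) n : pt R n := ebasis R (tix n).
Definition dtv (R : realType) n : pt R n := ebasis R (tix n).

Definition pair (R : realType) n (a v : pt R n) : R := \sum_i a 0 i * v 0 i.

(* the projection j_* on vectors and on covectors: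
   j_* d/dt = 0, j_* d/dx^i = d/dx^i, j_* dt = 0, j_* dx^i = dx^i *)
Definition jproj (R : realType) n (v : pt R n) : pt R n :=
  \row_i (if i == tix n then 0 else v 0 i).

(* A tensor field of type (r,s) : at each point p, a function of r covector
   arguments and s vector arguments. *)
Definition tensor (R : realType) n (r s : nat) :=
  pt R n -> ('I_r -> pt R n) -> ('I_s -> pt R n) -> R.

Definition upd (T : Type) k (a : 'I_k -> T) (i : 'I_k) (x : T) : 'I_k -> T :=
  fun j => if j == i then x else a j.

Definition multilinear (R : realType) n k (f : ('I_k -> pt R n) -> R) :=
  forall (a : 'I_k -> pt R n) (i : 'I_k) (c : R) (x y : pt R n),
    f (upd a i (c *: x + y)) = c * f (upd a i x) + f (upd a i y).

Fixpoint Dseq (R : realType) n (W : normedModType R) (vs : seq (pt R n))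
    (f : pt R n -> W) : pt R n -> W :=
  match vs with
  | [::] => f
  | v :: vs' => fun p => 'D_v (Dseq vs' f) p
  end.

Definition smooth_on (R : realType) n (W : normedModType R) (D : set (pt R n))
    (f : pt R n -> W) :=
  forall (vs : seq (pt R n)) (p : pt R n), D p -> differentiable (Dseq vs f) p.

Definition tensor_field (R : realType) n r s (D : set (pt R n)) (T : tensor R n r s) :=
  (forall p, D p ->
     (forall X, multilinear (fun A => T p A X)) /\
     (forall A, multilinear (fun X => T p A X))) /\
  (forall A X, smooth_on D (fun p => T p A X : R^o)).

Definition form_on (R : realType) n k (D : set (pt R n)) (w : tensor R n 0 k) :=
  tensor_field D w /\
  forall p, D p -> forall A (X : 'I_k -> pt R n) (i j : 'I_k),
    i != j -> X i = X j -> w p A X = 0.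

Definition vector_field (R : realType) n (D : set (pt R n)) (S : pt R n -> pt R n) :=
  smooth_on D S.

Definition spatial_tensor (R : realType) n r s (D : set (pt R n)) (T : tensor R n r s) :=
  forall p, D p -> forall A X,
    ((exists k, A k = dtc R n) \/ (exists k, X k = dtv R n)) -> T p A X = 0.

Definition spatial_vector_field (R : realType) n (D : set (pt R n))
    (S : pt R n -> pt R n) :=
  forall p, D p -> pair (dtc R n) (S p) = 0.

Definition jT (R : realType) n r s (T : tensor R n r s) : tensor R n r s :=
  fun p A X => T p (fun k => jproj (A k)) (fun k => jproj (X k)).

(* alpha o L  for a covector alpha and linear map L *)
Definition copull (R : realType) n (L : pt R n -> pt R n) (a : pt R n) : pt R n :=
  \row_i pair a (L (ebasis R i)).

(* Pullback by Psi (with inverse Phi):  on vectors Psi^*Y = (Psi^{-1})_*Y,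
   on covectors Psi^*a = a o dPsi, hence on tensors
   (Psi^*T)_p(b.., w..) = T_{Psi p}(b.. o dPhi_{Psi p}, dPsi_p w..). *)
Definition pullback (R : realType) n r s (Psi Phi : pt R n -> pt R n)
    (T : tensor R n r s) : tensor R n r s :=
  fun p A X => T (Psi p) (fun k => copull ('d Phi (Psi p)) (A k))
                         (fun k => 'd Psi p (X k)).

Definition cons_arg (T : Type) k (x : T) (a : 'I_k -> T) : 'I_k.+1 -> T :=
  fun i => if unlift ord0 i is Some j then a j else x.
Definition inner_prod (R : realType) n k (S : pt R n -> pt R n)
    (w : tensor R n 0 k.+1) : tensor R n 0 k :=
  fun p A X => w p A (cons_arg (S p) X).

Definition diffeo (R : realType) n (U V : set (pt R n)) (Psi Phi : pt R n -> pt R n) :=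
  open U /\ open V /\
  (forall p, U p -> V (Psi p)) /\ (forall q, V q -> U (Phi q)) /\
  (forall p, U p -> Phi (Psi p) = p) /\ (forall q, V q -> Psi (Phi q) = q) /\
  smooth_on U Psi /\ smooth_on V Phi.

From HB Require Import structures.
From mathcomp Require Import all_boot all_order all_algebra.
From mathcomp Require Import all_classical all_reals all_analysis.
Set Implicit Arguments.
Unset Strict Implicit.
Unset Printing Implicit Defensive.
Import Order.TTheory GRing.Theory Num.Theory.
Import numFieldNormedType.Exports.
Local Open Scope classical_set_scope.
Local Open Scope ring_scope.

(* Since Psi preserves t, its differential preserves the dt-component of
   vectors, so it maps spatial vectors to spatial vectors; this is (1).  In
   (2) the n+1 arguments of omega, namely S and the images of spatial
   vectors, all lie in the n-dimensional space of spatial vectors; they are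
   therefore linearly dependent and the alternating form omega vanishes on
   them.  For (3), Psi and its inverse fix the slice pointwise, so at points
   of the slice their differentials fix the spatial vectors (which are
   tangent to the slice); a spatial tensor only sees the spatial parts of its
   arguments, and those are left unchanged by the pullback. *)

Section line_derivatives.
Variables (R : realType) (V : normedModType R).

Lemma near_line (D : set V) (p v : V) :
  open D -> D p -> \forall h \near (0 : R), D (h *: v + p).
Proof.
move=> oD Dp.
have line_cvg : (fun h : R => h *: v + p) @ (0 : R) --> p.
  rewrite -{2}(add0r p); apply: cvgD; last exact: cvg_cst.
  by rewrite -(scale0r v); apply: cvgZ; [exact: cvg_id | exact: cvg_cst].
by apply: line_cvg; apply: open_nbhs_nbhs.
Qed.

Lemma near_line_eq_derive {W : normedModType R} {f g : V -> W} {a v : V} :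
  (\forall h \near (0 : R), f (h *: v + a) = g (h *: v + a)) ->
  'D_v f a = 'D_v g a.
Proof.
move=> fg.
have fga : f a = g a by have := nbhs_singleton fg; rewrite scale0r add0r.
rewrite /derive; congr (lim _).
rewrite eqEsubset; split; apply/near_eq_cvg/cvg_within; near=> h;
  by rewrite /= fga (near fg h).
Unshelve. all: by end_near. Qed.

Lemma diff_fixed_line (F : V -> V) (p v : V) :
  differentiable F p -> (\forall h \near (0 : R), F (h *: v + p) = h *: v + p) ->
  'd F p v = v.
Proof.
by move=> dF Fid; rewrite -deriveE // (near_line_eq_derive (g := id) Fid) derive_id.
Qed.

End line_derivatives.

Section spatial_vectors.
Variables (R : realType) (n : nat).
Implicit Types (a v : pt R n).

Definition spatial v := v 0 (tix n) = 0.

Lemma pair_ebasisr a i : pair a (ebasis R i) = a 0 i.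
Proof.
rewrite /pair (bigD1 i) //= big1 ?addr0; last first.
  by move=> j /negbTE ji; rewrite !mxE ji andbF mulr0.
by rewrite !mxE !eqxx mulr1.
Qed.

Lemma pair_ebasisl v i : pair (ebasis R i) v = v 0 i.
Proof.
rewrite /pair (bigD1 i) //= big1 ?addr0; last first.
  by move=> j /negbTE ji; rewrite !mxE ji andbF mul0r.
by rewrite !mxE !eqxx mul1r.
Qed.

Lemma ebasis_spatial i : i != tix n -> spatial (ebasis R i).
Proof. by move=> it; rewrite /spatial mxE eqxx /= eq_sym (negbTE it). Qed.

Lemma jproj_spatial v : spatial (jproj v).
Proof. by rewrite /spatial !mxE eqxx. Qed.

Lemma jproj_id v : spatial v -> jproj v = v.
Proof.
move=> vt; apply/matrixP => i j; rewrite !mxE ord1.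
by case: eqP => // ->; rewrite vt.
Qed.

Lemma jprojE v : v = v 0 (tix n) *: ebasis R (tix n) + jproj v.
Proof.
apply/matrixP => i j; rewrite !mxE ord1 eqxx /=.
by case: eqP => [->|_]; rewrite ?mulr1 ?addr0 ?mulr0 ?add0r.
Qed.

Lemma jproj_copull_fixed (L : pt R n -> pt R n) a :
  (forall i, i != tix n -> L (ebasis R i) = ebasis R i) ->
  jproj (copull L (jproj a)) = jproj a.
Proof.
move=> Lfix; apply/matrixP => i j; rewrite !mxE.
have [//|jt] := eqVneq j (tix n).
by rewrite Lfix // pair_ebasisr mxE (negbTE jt).
Qed.

End spatial_vectors.

Section multilinear_forms.
Variables (R : realType) (n : nat).

Definition alternating k (f : ('I_k -> pt R n) -> R) :=
  forall (X : 'I_k -> pt R n) i j, i != j -> X i = X j -> f X = 0.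

Lemma upd_id T k (a : 'I_k -> T) i : upd a i (a i) = a.
Proof. by apply/funext => j; rewrite /upd; case: eqP => // ->. Qed.

Lemma multilinear_upd0 k (f : ('I_k -> pt R n) -> R) a i :
  multilinear f -> f (upd a i 0) = 0.
Proof.
move=> ml; have := ml a i 1 0 0; rewrite scaler0 addr0 mul1r => f0.
by apply: (addrI (f (upd a i 0))); rewrite addr0 -f0.
Qed.

Lemma multilinear_upd_sum k (f : ('I_k -> pt R n) -> R) a i
    (J : finType) (c : J -> R) (x : J -> pt R n) :
  multilinear f ->
  f (upd a i (\sum_j c j *: x j)) = \sum_j c j * f (upd a i (x j)).
Proof.
move=> ml; elim/big_rec2: _ => [|j y1 y2 _ <-]; first exact: multilinear_upd0.
by rewrite ml.
Qed.

(* Some nonzero combination u of the rows X i vanishes; substituting it into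
   an argument X j with u_j != 0 expands f X into terms that all vanish. *)
Lemma alternating_det0 (f : ('I_n.+1 -> pt R n) -> R) (X : 'I_n.+1 -> pt R n) :
  multilinear f -> alternating f -> \det (\matrix_(i, j) X i 0 j) = 0 -> f X = 0.
Proof.
set M := \matrix_(i, j) _ => ml alt /eqP/det0P[u u0 uM].
have [j uj] : exists j, u 0 j != 0.
  apply/existsP; apply: contraR u0 => /existsPn u_eq0.
  by apply/eqP/matrixP => a b; rewrite ord1 !mxE; apply/eqP/negbNE.
have rowM i : row i M = X i by apply/matrixP => a b; rewrite ord1 !mxE.
have := multilinear_upd0 X j ml.
rewrite -uM mulmx_sum_row; under eq_bigr do rewrite rowM.
rewrite multilinear_upd_sum // (bigD1 j) //= big1 ?addr0 ?upd_id.
  by move/eqP; rewrite mulf_eq0 (negbTE uj) => /eqP.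
by move=> i ij; rewrite (alt _ i j) ?mulr0 // /upd (negbTE ij) eqxx.
Qed.

Lemma alternating_spatial_eq0 (f : ('I_n.+1 -> pt R n) -> R) (X : 'I_n.+1 -> pt R n) :
  multilinear f -> alternating f -> (forall j, spatial (X j)) -> f X = 0.
Proof.
move=> ml alt Xsp; apply: alternating_det0 => //; apply/eqP.
rewrite -det_tr; apply/det0P; exists (delta_mx 0 (tix n)).
  apply/negP => /eqP/matrixP/(_ 0 (tix n)); rewrite !mxE !eqxx /=.
  by move/eqP; rewrite oner_eq0.
by rewrite -rowE; apply/matrixP => a b; rewrite !mxE Xsp.
Qed.

Section vanishing_on_time.
Variables (k : nat) (f : ('I_k -> pt R n) -> R).
Hypotheses (ml : multilinear f)
  (f_time0 : forall Y i, Y i = ebasis R (tix n) -> f Y = 0).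

Lemma multilinear_upd_jproj Y i : f (upd Y i (Y i)) = f (upd Y i (jproj (Y i))).
Proof.
by rewrite {1}(jprojE (Y i)) ml (f_time0 (i := i)) ?mulr0 ?add0r // /upd eqxx.
Qed.

Lemma multilinear_jproj Y : f Y = f (fun i => jproj (Y i)).
Proof.
pose Z m (i : 'I_k) := if (i < m)%N then jproj (Y i) else Y i.
suff fZ m : f Y = f (Z m).
  by rewrite (fZ k); congr f; apply/funext => i; rewrite /Z ltn_ord.
elim: m => [|m ->]; first by congr f; apply/funext.
have [mk | km] := ltnP m k; last first.
  congr f; apply/funext => i; have im := leq_trans (ltn_ord i) km.
  by rewrite /Z im ltnS (ltnW im).
pose i0 := Ordinal mk.
have Zi0 : Z m i0 = Y i0 by rewrite /Z ltnn.
rewrite -(upd_id (Z m) i0) multilinear_upd_jproj Zi0.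
congr f; apply/funext => i; rewrite /upd /Z ltnS.
case: (eqVneq i i0) => [->|ne]; first by rewrite leqnn.
by rewrite [in RHS]leq_eqVlt (negbTE (ne : nat_of_ord i != m)).
Qed.

End vanishing_on_time.

End multilinear_forms.

Section pullbacks.
Variables (R : realType) (n : nat).

Lemma spatial_tensor_jT r s (D : set (pt R n)) (B : tensor R n r s) p :
  tensor_field D B -> spatial_tensor D B -> D p ->
  forall A X, B p A X = jT B p A X.
Proof.
move=> [Bml _] Bsp Dp A X; have [mlA mlX] := Bml p Dp.
rewrite (multilinear_jproj (mlA X)); last first.
  by move=> Y i Yi; apply: Bsp => //; left; exists i.
rewrite (multilinear_jproj (mlX _)) //.
by move=> Y i Yi; apply: Bsp => //; right; exists i.
Qed.

Lemma diff_time_preserving (D : set (pt R n)) (F : pt R n -> pt R n) q v :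
  open D -> D q -> differentiable F q ->
  (forall p, D p -> tcoord (F p) = tcoord p) ->
  ('d F q v) 0 (tix n) = v 0 (tix n).
Proof.
move=> oD Dq dF Ft.
rewrite -deriveE // derive_mx ?mxE; last exact: diff_derivable.
have -> : 'D_v (fun x => F x 0 (tix n)) q = 'D_v (fun x : pt R n => x 0 (tix n)) q.
  by apply: near_eq_derive; near=> x; apply: Ft; near: x; apply: open_nbhs_nbhs.
have := derive_mx (@derivable_id _ _ q v).
by rewrite derive_id => /matrixP/(_ 0 (tix n)); rewrite mxE.
Unshelve. all: by end_near. Qed.

Variables (Psi Phi : pt R n -> pt R n) (p : pt R n).
Hypothesis dPsi_spatial : forall v, spatial v -> spatial ('d Psi p v).

Lemma jT_pullback_jT k (w : tensor R n 0 k) A X :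
  jT (pullback Psi Phi w) p A X = jT (pullback Psi Phi (jT w)) p A X.
Proof.
congr (w _ _ _); apply/funext => i; first by case: i.
by rewrite [RHS]jproj_id //; apply/dPsi_spatial/jproj_spatial.
Qed.

Lemma jT_pullback_inner_prod_eq0 (w : tensor R n 0 n.+1) S A X :
  (forall A', multilinear (w (Psi p) A')) -> (forall A', alternating (w (Psi p) A')) ->
  spatial (S (Psi p)) -> jT (pullback Psi Phi (inner_prod S w)) p A X = 0.
Proof.
move=> ml alt Ssp; apply: alternating_spatial_eq0; [exact: ml | exact: alt | move=> j].
by rewrite /cons_arg; case: unliftP => [j' _|_] //; apply/dPsi_spatial/jproj_spatial.
Qed.

Lemma jT_pullback_fixed r s (D : set (pt R n)) (B : tensor R n r s) :
  tensor_field D B -> spatial_tensor D B -> D p -> Psi p = p ->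
  (forall v, spatial v -> 'd Psi p v = v) ->
  (forall i, i != tix n -> 'd Phi p (ebasis R i) = ebasis R i) ->
  forall A X, jT (pullback Psi Phi B) p A X = B p A X.
Proof.
move=> Bf Bsp Dp Pp dPsi_fix dPhi_fix A X.
rewrite /jT /pullback Pp [LHS](spatial_tensor_jT Bf) // [RHS](spatial_tensor_jT Bf) //.
congr (B p _ _); apply/funext => k; first exact: jproj_copull_fixed.
by rewrite (dPsi_fix _ (jproj_spatial (X k))) (jproj_id (jproj_spatial (X k))).
Qed.

End pullbacks.

Lemma slice_near_line (R : realType) n (Sig : set 'rV[R]_n) (I : set R) t0
    (U : set (pt R n)) p v :
  open U -> U `<=` Mset Sig I -> (slice Sig I t0 `&` U) p -> spatial v ->
  \forall h \near (0 : R), (slice Sig I t0 `&` U) (h *: v + p).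
Proof.
move=> oU UM [[_ tp] Up] vt; near=> h.
have Uh : U (h *: v + p) by near: h; apply: near_line.
split=> //; split; first exact: UM.
by rewrite /tcoord !mxE vt mulr0 add0r.
Unshelve. all: by end_near. Qed.

Theorem lemma4p1 (R : realType) (n : nat) (Sig : set 'rV[R]_n) (I : set R)
  (U V : set (pt R n)) (Psi Phi : pt R n -> pt R n) :
  open Sig -> open I -> is_interval I ->
  U `<=` Mset Sig I -> V `<=` Mset Sig I ->
  diffeo U V Psi Phi ->
  (forall p, U p -> tcoord (Psi p) = tcoord p) ->
  (* (1) *)
  (forall (k : nat) (w : tensor R n 0 k), tensor_field V w ->
     forall p, U p -> forall A X,
       jT (pullback Psi Phi w) p A X = jT (pullback Psi Phi (jT w)) p A X) /\
  (* (2) *)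
  (forall (w : tensor R n 0 n.+1) (S : pt R n -> pt R n),
     form_on V w -> vector_field V S -> spatial_vector_field V S ->
     forall p, U p -> forall A X,
       jT (pullback Psi Phi (inner_prod S w)) p A X = 0) /\
  (* (3) *)
  (forall t0 : R, (forall p, (slice Sig I t0 `&` U) p -> Psi p = p) ->
     forall (r s : nat) (B : tensor R n r s),
       tensor_field V B -> spatial_tensor V B ->
       forall p, (slice Sig I t0 `&` U) p -> forall A X,
         jT (pullback Psi Phi B) p A X = B p A X).
Proof.
move=> _ _ _ UM _ [oU [_ [PsiUV [_ [PhiPsi [_ [sPsi sPhi]]]]]]] tPsi.
have dPsi_spatial p : U p -> forall v, spatial v -> spatial ('d Psi p v).
  by move=> Up v; rewrite /spatial (diff_time_preserving _ oU Up (sPsi [::] p Up) tPsi).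
split; [|split].
- by move=> k w _ p Up A X; apply/jT_pullback_jT/dPsi_spatial.
- move=> w S [[wml _] walt] _ Ssp p Up A X; have Vp := PsiUV p Up.
  apply: jT_pullback_inner_prod_eq0; first exact: dPsi_spatial.
  + by move=> A'; apply: (wml _ Vp).2.
  + by move=> A' Y i j; apply: walt.
  + by rewrite /spatial -(Ssp _ Vp) /dtc pair_ebasisl.
- move=> t0 Psi_id r s B Bf Bsp p Sp A X.
  have Up : U p by case: Sp.
  have Pp : Psi p = p by apply: Psi_id.
  have Vp : V p by rewrite -Pp; apply: PsiUV.
  apply: (jT_pullback_fixed Bf Bsp) => // [v vt | i it].
    apply: diff_fixed_line; first exact: sPsi [::] p Up.
    by apply: filterS (slice_near_line oU UM Sp vt) => h; apply: Psi_id.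
  apply: diff_fixed_line; first exact: sPhi [::] p Vp.
  apply: filterS (slice_near_line oU UM Sp (ebasis_spatial R it)) => q Sq.
  by case: (Sq) => _ Uq; rewrite -[in LHS](Psi_id _ Sq) PhiPsi.
Qed.
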